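(* Let $R$ be a commutative Noetherian ring and $n$ a non-negative integer. Let $0\to M'\to M\to M''\to 0$ be an exact sequence of $R$-modules. Then $M$ is in dimension $<n$ if and only if both $M'$ and $M''$ are in dimension $<n$.
   Context: For an $R$-module $L$, $\dim\operatorname{Supp}L=\sup\{\dim R/\mathfrak p:\mathfrak p\in\operatorname{Supp}L\}$, the zero module having dimension $-\infty$. An $R$-module $L$ is ''in dimension $<n$'' if there is a finitely generated submodule $N\subseteq L$ with $\dim\operatorname{Supp}(L/N)<n$. *)

From mathcomp Require Import all_boot all_algebra.
Set Implicit Arguments.
Unset Strict Implicit.
Unset Printing Implicit Defensive.
Import GRing.Theory.
Local Open Scope ring_scope.

Definition is_ideal (R : comPzRingType) (I : R -> Prop) : Prop :=
  I 0 /\ (forall a b, I a -> I b -> I (a + b)) /\ (forall r a, I a -> I (r * a)).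

Definition ideal_fg (R : comPzRingType) (I : R -> Prop) : Prop :=
  exists s : seq R, forall x,
    I x <-> exists c : 'I_(size s) -> R, x = \sum_(i < size s) c i * s`_i.

Definition noetherian (R : comPzRingType) : Prop :=
  forall I : R -> Prop, is_ideal I -> ideal_fg I.

Definition prime_ideal (R : comPzRingType) (P : R -> Prop) : Prop :=
  is_ideal P /\ ~ P 1 /\ (forall a b, P (a * b) -> P a \/ P b).

(* dim R/p >= k : there is a chain of primes p = q_0 < q_1 < ... < q_k. *)
Definition dim_quot_ge (R : comPzRingType) (p : R -> Prop) (k : nat) : Prop :=
  exists q : nat -> R -> Prop,
    (forall x, q 0%N x <-> p x) /\
    (forall i, (i <= k)%N -> prime_ideal (q i)) /\
    (forall i, (i < k)%N ->
       (forall x, q i x -> q i.+1 x) /\ (exists x, q i.+1 x /\ ~ q i x)).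

(* p in Supp (L/N), N a submodule of L:  p prime and (L/N)_p <> 0, i.e.
   some class x + N is not killed by any s outside p. *)
Definition in_supp_quot (R : comPzRingType) (L : lmodType R)
    (N : L -> Prop) (p : R -> Prop) : Prop :=
  prime_ideal p /\ exists x : L, forall s : R, ~ p s -> ~ N (s *: x).

(* dim Supp (L/N) < n  (sup over the support, with sup of empty = -oo). *)
Definition dim_supp_quot_lt (R : comPzRingType) (L : lmodType R)
    (N : L -> Prop) (n : nat) : Prop :=
  forall p : R -> Prop, in_supp_quot N p -> ~ dim_quot_ge p n.

Definition span_seq (R : comPzRingType) (L : lmodType R) (s : seq L) (x : L) : Prop :=
  exists c : 'I_(size s) -> R, x = \sum_(i < size s) c i *: s`_i.

Definition in_dim_lt (R : comPzRingType) (L : lmodType R) (n : nat) : Prop :=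
  exists s : seq L, dim_supp_quot_lt (span_seq s) n.

(* If y represents a point of Supp(M/N), either its image survives in M''/g(N), or
   u*y is congruent modulo N to some f(x') with u outside p, and then x' survives in
   M'/f^-1(N); taking N generated by the images of generators for M' and lifts of
   generators for M'' gives the "if" direction.  Conversely Supp(M''/g(N)) and
   Supp(M'/f^-1(N)) lie in Supp(M/N); that f^-1(N) is finitely generated when N is
   uses that submodules of finitely generated modules over a Noetherian ring are
   finitely generated. *)

From mathcomp Require Import all_boot all_algebra.
From Stdlib Require Import Classical.
Import GRing.Theory.
Local Open Scope ring_scope.

Set Implicit Arguments.
Unset Strict Implicit.
Unset Printing Implicit Defensive.

Lemma lift_seq (A : Type) (B : eqType) (h : A -> B) (t : seq B) :
  {in t, forall z, exists y, h y = z} -> exists u, map h u = t.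
Proof.
elim: t => [|z t IHt] liftable; first by exists [::].
have [y hy] := liftable z (mem_head z t).
have [u hu] := IHt (fun w tw => liftable w (mem_behead (s := z :: t) tw)).
by exists (y :: u); rewrite /= hy hu.
Qed.

Section Submodules.
Variables (R : comPzRingType) (L : lmodType R).

Record submodule (P : L -> Prop) : Prop := Submodule {
  submodule0 : P 0;
  submoduleD : forall x y, P x -> P y -> P (x + y);
  submoduleZ : forall r x, P x -> P (r *: x)
}.

Lemma submoduleB P x y : submodule P -> P x -> P y -> P (x - y).
Proof. by case=> _ PD PZ Px Py; rewrite -scaleN1r; apply/PD/PZ. Qed.

Lemma submoduleI P Q : submodule P -> submodule Q -> submodule (fun x => P x /\ Q x).
Proof.
case=> P0 PD PZ [Q0 QD QZ]; split=> [|x y [Px Qx] [Py Qy]|r x [Px Qx]].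
- by [].
- by split; [apply: PD | apply: QD].
- by split; [apply: PZ | apply: QZ].
Qed.

Lemma span_seq_nil x : span_seq ([::] : seq L) x <-> x = 0.
Proof.
split=> [[c ->]|->]; first by rewrite big_ord0.
by exists (fun=> 0); rewrite big_ord0.
Qed.

Lemma span_seq_cons (a : L) (s : seq L) x :
  span_seq (a :: s) x <-> exists r y, span_seq s y /\ x = r *: a + y.
Proof.
split=> [[c ->]|[r [_ [[c ->] ->]]]].
  rewrite big_ord_recl; exists (c ord0), (\sum_(i < size s) c (lift ord0 i) *: s`_i).
  by split=> //; exists (fun i => c (lift ord0 i)).
exists (fun i : 'I_(size s).+1 => if unlift ord0 i is Some j then c j else r).
by rewrite big_ord_recl unlift_none; congr (_ + _); apply: eq_bigr => i _; rewrite liftK.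
Qed.

Lemma span_seq_submodule (s : seq L) : submodule (span_seq s).
Proof.
elim: s => [|a s [S0 SD SZ]].
  by split=> [|x y|r x]; rewrite ?span_seq_nil // => ->; [move=> ->; rewrite addr0|rewrite scaler0].
split=> [|x y|t x].
- by apply/span_seq_cons; exists 0, 0; rewrite scale0r addr0.
- case/span_seq_cons=> [r [u [su ->]]] /span_seq_cons [r' [u' [su' ->]]].
  apply/span_seq_cons; exists (r + r'), (u + u'); split; first exact: SD.
  by rewrite scalerDl addrACA.
- case/span_seq_cons=> [r [u [su ->]]]; apply/span_seq_cons.
  by exists (t * r), (t *: u); rewrite scalerDr scalerA; split; first exact: SZ.
Qed.

Lemma span_seq_mem (s : seq L) x : x \in s -> span_seq s x.
Proof.
elim: s => [|a s IHs] //; rewrite inE => /predU1P[->|/IHs sx]; apply/span_seq_cons.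
  by exists 1, 0; rewrite scale1r addr0; split; first exact: submodule0 (span_seq_submodule s).
by exists 0, x; rewrite scale0r add0r.
Qed.

Lemma span_seq_cat (s1 s2 : seq L) x :
  span_seq (s1 ++ s2) x <-> exists x1 x2, span_seq s1 x1 /\ span_seq s2 x2 /\ x = x1 + x2.
Proof.
elim: s1 x => [|a s1 IHs1] x /=.
  split=> [s2x|[x1 [x2 [/span_seq_nil -> [s2x ->]]]]]; last by rewrite add0r.
  by exists 0, x; rewrite add0r span_seq_nil.
split.
  case/span_seq_cons=> [r [y [/IHs1 [x1 [x2 [s1x1 [s2x2 ->]]]] ->]]].
  exists (r *: a + x1), x2; rewrite addrA; split=> //.
  by apply/span_seq_cons; exists r, x1.
case=> _ [x2 [/span_seq_cons [r [x1 [s1x1 ->]]] [s2x2 ->]]].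
by apply/span_seq_cons; exists r, (x1 + x2); rewrite addrA; split=> //; apply/IHs1; exists x1, x2.
Qed.

Lemma span_seq_catl (s1 s2 : seq L) x : span_seq s1 x -> span_seq (s1 ++ s2) x.
Proof.
move=> s1x; apply/span_seq_cat; exists x, 0; rewrite addr0; split=> //.
by split=> //; apply: submodule0 (span_seq_submodule s2).
Qed.

Lemma span_seq_catr (s1 s2 : seq L) x : span_seq s2 x -> span_seq (s1 ++ s2) x.
Proof.
move=> s2x; apply/span_seq_cat; exists 0, x; rewrite add0r; split=> //.
exact: submodule0 (span_seq_submodule s1).
Qed.

End Submodules.

Lemma submodule_image (R : comPzRingType) (L1 L2 : lmodType R) (h : {linear L1 -> L2}) :
  submodule (fun y => exists x, h x = y).
Proof.
split=> [|_ _ [x <-] [x' <-]|r _ [x <-]]; first by exists 0; rewrite linear0.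
  by exists (x + x'); rewrite linearD.
by exists (r *: x); rewrite linearZZ.
Qed.

Lemma span_seq_map (R : comPzRingType) (L1 L2 : lmodType R) (h : {linear L1 -> L2}) s z :
  span_seq (map h s) z <-> exists y, span_seq s y /\ h y = z.
Proof.
elim: s z => [|a s IHs] z /=.
  rewrite span_seq_nil; split=> [->|[y [/span_seq_nil -> <-]]]; last exact: linear0.
  by exists 0; rewrite linear0 span_seq_nil.
split.
  case/span_seq_cons=> [r [_ [/IHs [y [sy <-]] ->]]].
  by exists (r *: a + y); rewrite linearD linearZZ; split=> //; apply/span_seq_cons; exists r, y.
case=> _ [/span_seq_cons [r [y [sy ->]]] <-]; apply/span_seq_cons.
by exists r, (h y); rewrite linearD linearZZ; split=> //; apply/IHs; exists y.
Qed.

Section NoetherianModules.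
Variables (R : comPzRingType) (L : lmodType R).

Section CoefficientIdeal.
Variables (a : L) (s : seq L) (P : L -> Prop).
Hypothesis subP : submodule P.

Definition coef_ideal (r : R) := exists y, span_seq s y /\ P (r *: a + y).

Lemma coef_ideal_is_ideal : is_ideal coef_ideal.
Proof.
have [S0 SD SZ] := span_seq_submodule s; have [P0 PD PZ] := subP.
split; last split.
- by exists 0; rewrite scale0r addr0.
- move=> r r' [y [sy Py]] [y' [sy' Py']]; exists (y + y'); split; first exact: SD.
  by rewrite scalerDl addrACA; apply: PD.
- move=> t r [y [sy Py]]; exists (t *: y); split; first exact: SZ.
  by rewrite -scalerA -scalerDr; apply: PZ.
Qed.

(* [ideal_fg] is, up to conversion, finite generation in the regular module [R^o]. *)
Lemma lift_coef_ideal (q : seq R^o) : {in q, forall r, coef_ideal r} ->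
  exists w, (forall z, span_seq w z -> P z) /\
    forall r, span_seq q r -> exists z, span_seq w z /\ span_seq s (z - r *: a).
Proof.
have [S0 SD SZ] := span_seq_submodule s; have [P0 PD PZ] := subP.
elim: q => [|b q IHq] coef_q.
  exists [::]; split=> [z /span_seq_nil -> //|r /span_seq_nil ->].
  by exists 0; rewrite scale0r subr0 span_seq_nil.
have [yb [syb Pb]] := coef_q b (mem_head b q).
have [w [Pw lift_w]] := IHq (fun r qr => coef_q r (mem_behead (s := b :: q) qr)).
exists ((b *: a + yb) :: w); split.
  by move=> _ /span_seq_cons [t [z [wz ->]]]; apply: PD; [apply: PZ | exact: Pw].
move=> _ /span_seq_cons [t [r [qr ->]]]; have [z [wz sz]] := lift_w r qr.
exists (t *: (b *: a + yb) + z); split; first by apply/span_seq_cons; exists t, z.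
have -> : t *: (b *: a + yb) + z - (t * b + r) *: a = t *: yb + (z - r *: a).
  by rewrite scalerDr scalerA scalerDl opprD addrACA [_ - _ *: a]addrC addKr.
by apply: SD => //; apply: SZ.
Qed.

End CoefficientIdeal.

Lemma noetherian_span_submodule_fg (P : L -> Prop) (s : seq L) :
  noetherian R -> submodule P -> (forall x, P x -> span_seq s x) ->
  exists s', forall x, P x <-> span_seq s' x.
Proof.
move=> noethR; elim: s P => [|a s IHs] P subP Ps.
  by exists [::] => x; rewrite span_seq_nil; split=> [/Ps/span_seq_nil|->]; last case: subP.
have [q gen_q] := noethR _ (coef_ideal_is_ideal a s subP).
have [w [Pw lift_w]] :=
  lift_coef_ideal subP (q := q) (fun r qr => proj2 (gen_q r) (span_seq_mem qr)).
have [s1 gen_s1] := IHs _ (submoduleI subP (span_seq_submodule s)) (fun x => @proj2 _ _).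
(* Each x in P differs from an element of span w by an element of P /\ span s. *)
exists (w ++ s1) => x; split=> [Px | /span_seq_cat [z [x1 [wz [/gen_s1 [Px1 _] ->]]]]].
  have [r [y [sy ex]]] := (span_seq_cons _ _ _).1 (Ps x Px).
  have [z [wz sz]] : exists z, span_seq w z /\ span_seq s (z - r *: a).
    by apply: lift_w; apply/gen_q; exists y; rewrite -ex.
  apply/span_seq_cat; exists z, (x - z); split=> //; split; last by rewrite addrC subrK.
  apply/gen_s1; split; first by apply: submoduleB => //; exact: Pw.
  by rewrite ex addrAC addrC -opprB; apply: submoduleB (span_seq_submodule s) sy sz.
by case: subP => _ PD _; apply: PD => //; exact: Pw.
Qed.

End NoetherianModules.

Section Support.
Variable R : comPzRingType.
Implicit Types L : lmodType R.

Lemma in_supp_quot_antimono L (N1 N2 : L -> Prop) p :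
  (forall x, N1 x -> N2 x) -> in_supp_quot N2 p -> in_supp_quot N1 p.
Proof. by move=> N12 [pp [x N2x]]; split=> // []; exists x => t tp /N12; apply: N2x. Qed.

Lemma in_supp_quot_preim L1 L2 (h : {linear L1 -> L2}) (N : L2 -> Prop) p :
  in_supp_quot (fun x => N (h x)) p -> in_supp_quot N p.
Proof. by case=> pp [x Nhx]; split=> //; exists (h x) => t tp; rewrite -linearZZ; apply: Nhx. Qed.

Lemma in_supp_quot_image L1 L2 (h : {linear L1 -> L2}) (N : L1 -> Prop) p :
  (forall z, exists y, h y = z) ->
  in_supp_quot (fun z => exists y, N y /\ h y = z) p -> in_supp_quot N p.
Proof.
move=> h_surj [pp [z hNz]]; have [y hyz] := h_surj z; split=> //.
by exists y => t tp Nty; apply: (hNz t tp); exists (t *: y); rewrite linearZZ hyz.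
Qed.

Lemma in_supp_quot_exact L' L L'' (f : {linear L' -> L}) (g : {linear L -> L''})
    (N : L -> Prop) p :
  (forall y, g y = 0 -> exists x, f x = y) -> submodule N -> in_supp_quot N p ->
  in_supp_quot (fun x => N (f x)) p \/ in_supp_quot (fun z => exists y, N y /\ g y = z) p.
Proof.
move=> ker_g subN [pp [y Ny]]; have [_ [_ p_prime]] := pp.
case: (classic (forall u, ~ p u -> ~ exists c, N c /\ g c = u *: g y)) => [gy_survives|].
  by right; split=> //; exists (g y).
move/not_all_ex_not=> [u not_u_survives].
have [up /NNPP [c [Nc gc]]] := imply_to_and _ _ not_u_survives.
left; split=> //.
have [x fx] : exists x, f x = u *: y - c by apply: ker_g; rewrite linearB linearZZ gc subrr.
exists x => v vp Nfvx; apply: (Ny (v * u)); first by case/p_prime.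
have -> : (v * u) *: y = f (v *: x) + v *: c by rewrite linearZZ fx scalerBr scalerA subrK.
by case: subN => _ ND NZ; apply: ND => //; apply: NZ.
Qed.

Lemma dim_supp_quot_lt_supp L1 L2 (N1 : L1 -> Prop) (N2 : L2 -> Prop) n :
  (forall p, in_supp_quot N1 p -> in_supp_quot N2 p) ->
  dim_supp_quot_lt N2 n -> dim_supp_quot_lt N1 n.
Proof. by move=> supp12 dimN2 p /supp12; apply: dimN2. Qed.

End Support.

Section DimensionInExactSequences.
Variable R : comPzRingType.
Implicit Types L : lmodType R.

Lemma in_dim_lt_submodule L' L (f : {linear L' -> L}) n :
  noetherian R -> injective f -> in_dim_lt L n -> in_dim_lt L' n.
Proof.
move=> noethR f_inj [s dim_s].
have subP := submoduleI (submodule_image f) (span_seq_submodule s).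
have [s' gen_s'] := noetherian_span_submodule_fg noethR subP (fun y => @proj2 _ _).
have [u fu] := lift_seq (h := f) (t := s') (fun y s'y => ((gen_s' y).2 (span_seq_mem s'y)).1).
exists u; apply: dim_supp_quot_lt_supp dim_s => p supp_u.
apply: (in_supp_quot_preim (h := f)); apply: in_supp_quot_antimono supp_u => x sfx.
have : span_seq (map f u) (f x) by rewrite fu; apply/gen_s'; split=> //; exists x.
by case/span_seq_map=> y [uy /f_inj <-].
Qed.

Lemma in_dim_lt_quotient L L'' (g : {linear L -> L''}) n :
  (forall z, exists y, g y = z) -> in_dim_lt L n -> in_dim_lt L'' n.
Proof.
move=> g_surj [s dim_s]; exists (map g s).
apply: dim_supp_quot_lt_supp dim_s => p supp_gs.
by apply: in_supp_quot_image g_surj _; apply: in_supp_quot_antimono supp_gs => z /span_seq_map.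
Qed.

Lemma in_dim_lt_extension L' L L'' (f : {linear L' -> L}) (g : {linear L -> L''}) n :
  (forall z, exists y, g y = z) -> (forall y, g y = 0 -> exists x, f x = y) ->
  in_dim_lt L' n -> in_dim_lt L'' n -> in_dim_lt L n.
Proof.
move=> g_surj ker_g [s' dim_s'] [s'' dim_s''].
have [t gt] := lift_seq (h := g) (t := s'') (fun z _ => g_surj z).
exists (map f s' ++ t) => p supp_p.
have [supp_f | supp_g] := in_supp_quot_exact ker_g (span_seq_submodule _) supp_p.
  apply: dim_s'; apply: in_supp_quot_antimono supp_f => x s'x.
  by apply/span_seq_catl/span_seq_map; exists x.
apply: dim_s''; apply: in_supp_quot_antimono supp_g => z.
by rewrite -gt => /span_seq_map [y [ty <-]]; exists y; split=> //; apply: span_seq_catr.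
Qed.

End DimensionInExactSequences.

Theorem proposition2p12 (R : comPzRingType) (n : nat)
    (M' M M'' : lmodType R) (f : {linear M' -> M}) (g : {linear M -> M''}) :
  noetherian R ->
  injective f ->
  (forall z : M'', exists y : M, g y = z) ->
  (forall y : M, g y = 0 <-> exists x : M', f x = y) ->
  (in_dim_lt M n <-> in_dim_lt M' n /\ in_dim_lt M'' n).
Proof.
move=> noethR f_inj g_surj exact_at_M; split=> [dimM | [dimM' dimM'']].
  split; first exact: in_dim_lt_submodule noethR f_inj dimM.
  exact: in_dim_lt_quotient g_surj dimM.
exact: in_dim_lt_extension g_surj (fun y => (exact_at_M y).1) dimM' dimM''.
Qed.
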